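(* Let $p_0=\mathcal{N}(\mu_0,\sigma^2)$ and $p_1=\mathcal{N}(\mu_1,\sigma^2)$ on the metric space $(\mathbb{R},|\cdot|)$ with $\mu_0<\mu_1$. Consider binary classification with labels $0,1$ equally likely, given $y=i$ the input $x\sim p_i$, classifiers indexed by closed sets $A\subseteq\mathbb{R}$ (output $1$ on $A$, $0$ on $A^c$), $0$-$1$ loss, and adversarial risk of $A$ given by $\mathbb{E}_{(x,y)}\big[\sup_{|x'-x|\le\epsilon}\mathbf{1}\{\mathbf{1}\{x'\in A\}\neq y\}\big]$; the optimal robust risk is the infimum of this over closed $A$. Then: (1) If $\epsilon\ge\frac{|\mu_0-\mu_1|}{2}$, the optimal robust risk is $1/2$, and a constant classifier achieves it. (2) If $\epsilon<\frac{|\mu_0-\mu_1|}{2}$, the set $A=\big[\frac{\mu_0+\mu_1}{2},+\infty\big)$ gives an optimal robust classifier, and the optimal robust risk equals $Q\!\left(\frac{\frac{\mu_1-\mu_0}{2}-\epsilon}{\sigma}\right)$.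
   Context: $Q(x)=1-\Phi(x)$, where $\Phi$ is the cdf of the standard normal distribution. *)

From HB Require Import structures.
From mathcomp Require Import all_boot all_order all_algebra.
From mathcomp Require Import all_classical all_reals all_analysis.
Set Implicit Arguments. Unset Strict Implicit. Unset Printing Implicit Defensive.
Import Order.TTheory GRing.Theory Num.Theory.
Import numFieldNormedType.Exports.
Local Open Scope classical_set_scope.
Local Open Scope ring_scope.

Definition Phi {R : realType} (x : R) : R :=
  fine (normal_prob 0 1 `]-oo, x]).
Definition Qfun {R : realType} (x : R) : R := 1 - Phi x.

(* Adversarial 0-1 loss of the classifier "1 on A, 0 on A^c" at (x, y),
   labels y : bool (false = 0, true = 1):
   sup_{|x'-x| <= eps} 1{ 1{x' \in A} <> y }. *)
Definition adv_loss {R : realType} (A : set R) (eps : R) (x : R) (y : bool)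
  : \bar R :=
  ereal_sup [set (((x' \in A) != y)%:R)%:E | x' in [set x' | `|x' - x| <= eps]].

Definition adv_risk {R : realType} (mu0 mu1 sigma eps : R) (A : set R) : \bar R :=
  ((1/2)%:E * \int[normal_prob mu0 sigma]_x adv_loss A eps x false
   + (1/2)%:E * \int[normal_prob mu1 sigma]_x adv_loss A eps x true)%E.

Definition opt_risk {R : realType} (mu0 mu1 sigma eps : R) : \bar R :=
  ereal_inf [set adv_risk mu0 mu1 sigma eps A | A in [set A : set R | closed A]].

From HB Require Import structures.
From mathcomp Require Import all_boot all_order all_algebra.
From mathcomp Require Import all_classical all_reals all_analysis.
From mathcomp Require Import measurable_realfun ring lra.
Set Implicit Arguments. Unset Strict Implicit. Unset Printing Implicit Defensive.
Import Order.TTheory GRing.Theory Num.Theory.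
Import numFieldNormedType.Exports HBNNSimple.
Local Open Scope classical_set_scope.
Local Open Scope ring_scope.

(* For a closed classifier A let T be the set of points within eps of the
   complement of A: class 1 is misclassified exactly on T, class 0 exactly on
   the eps-neighbourhood of A.  If |t| <= 2 eps and x + t lies outside T, then
   x + t/2 is in A and within eps of x, so class 0 is misclassified at x; hence
   the risk of A is at least (P_{mu0+t}(~T) + P_{mu1}(T)) / 2.  For
   mu1 - mu0 <= 2 eps, t = mu1 - mu0 makes this bound 1/2, which the empty
   classifier attains.  Otherwise t = 2 eps turns the bound into the Bayes risk
   of testing N(mu0 + 2 eps, sigma^2) against N(mu1, sigma^2), minimised by
   thresholding at their midpoint; it equals Q(((mu1 - mu0)/2 - eps)/sigma), the
   risk of the half-line classifier [(mu0 + mu1)/2, +oo). *)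

Section lebesgue_invariance.
Context {R : realType}.
Local Notation mu := (@lebesgue_measure R).

Lemma lebesgue_measure_shift (t : R) (A : set R) : measurable A ->
  pushforward mu (+%R^~ t : R -> measurableTypeR R) A = mu A.
Proof.
move=> mA; apply/esym/lebesgue_measure_unique => //.
  exact: measurable_funD.
move=> ? _ [[a b]] _ <-.
change (mu `]a, b] = mu ((+%R^~ t) @^-1` `]a, b])).
have -> : (+%R^~ t) @^-1` `]a, b]%classic = `]a - t, b - t]%classic :> set R.
  by apply/seteqP; split => x /=; rewrite !in_itv /= ltrBlDr lerBrDr.
rewrite !lebesgue_measure_itv/= !lte_fin ltrD2r.
by case: ifP => // _; rewrite -!EFinD; congr EFin; ring.
Qed.

Lemma ge0_integral_lebesgue_preimage
    (phi : measurableTypeR R -> measurableTypeR R) (V : set R) (f : R -> \bar R) :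
  measurable_fun setT phi -> (forall A, measurable A -> pushforward mu phi A = mu A) ->
  measurable V -> measurable_fun V f -> (forall x, V x -> 0 <= f x)%E ->
  (\int[mu]_(x in phi @^-1` V) f (phi x) = \int[mu]_(x in V) f x)%E.
Proof.
move=> mphi phiP mV mf f0.
rewrite -[LHS]/(\int[mu]_(x in phi @^-1` V) (f \o phi) x)%E.
rewrite -(ge0_integral_pushforward mphi) //; last by move=> x /set_mem; exact: f0.
by apply: eq_measure_integral => A mA _; exact: phiP.
Qed.

End lebesgue_invariance.

Section normal_prob_transformations.
Context {R : realType}.

Lemma normal_prob_shift (m s t : R) (V : set R) : s != 0 -> measurable V ->
  normal_prob m s ((+%R^~ t) @^-1` V) = normal_prob (m + t) s V.
Proof.
move=> s0 mV; rewrite /normal_prob.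
rewrite -[RHS](@ge0_integral_lebesgue_preimage _ (+%R^~ t)) //.
- apply: eq_integral => x _; rewrite /normal_pdf (negbTE s0) /normal_fun.
  by rewrite opprD addrACA subrr addr0.
- exact: measurable_funD.
- exact: lebesgue_measure_shift.
- by apply/measurable_EFinP; apply: measurable_funTS; exact: measurable_normal_pdf.
- by move=> x _; rewrite lee_fin normal_pdf_ge0.
Qed.

Lemma normal_prob_opp (s : R) (V : set R) : s != 0 -> measurable V ->
  normal_prob 0 s (-%R @^-1` V) = normal_prob 0 s V.
Proof.
move=> s0 mV; rewrite /normal_prob.
rewrite -[RHS](@ge0_integral_lebesgue_preimage _ -%R) //.
- apply: eq_integral => x _; rewrite /normal_pdf (negbTE s0) /normal_fun.
  by rewrite !subr0 sqrrN.
- exact: lebesgue_measureN.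
- by apply/measurable_EFinP; apply: measurable_funTS; exact: measurable_normal_pdf.
- by move=> x _; rewrite lee_fin normal_pdf_ge0.
Qed.

Lemma normal_prob_itvNyo (m s x : R) :
  normal_prob m s `]-oo, x[ = normal_prob m s `]-oo, x].
Proof.
rewrite -(@setUitv1 _ _ -oo%O x true) // measureU0 //; exact: integral_set1.
Qed.

Lemma normal_prob_itvcy (m s x : R) :
  normal_prob m s `[x, +oo[ = (1 - fine (normal_prob m s `]-oo, x]))%:E.
Proof.
rewrite -setCitvl probability_setC //=.
by rewrite normal_prob_itvNyo EFinB fineK // fin_num_measure.
Qed.

Lemma normal_pdf_affine (m s x : R) : 0 < s ->
  normal_pdf m s (m + x * s) * s = normal_pdf 0 1 x.
Proof.
move=> s0; have sn0 : s != 0 by rewrite gt_eqF.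
rewrite /normal_pdf (negbTE sn0) oner_eq0 /normal_fun (addrC m) addrK subr0 !mulNr.
have -> : (x * s) ^+ 2 / (s ^+ 2 *+ 2) = x ^+ 2 / (1 ^+ 2 *+ 2).
  by field; rewrite ?expr1n ?pnatr_eq0 ?mulrn_eq0 ?expf_eq0 /= ?sn0 ?oner_eq0.
rewrite mulrAC; congr (_ * _).
rewrite /normal_peak expr1n mul1r -!mulrnAr sqrtrM ?sqr_ge0 // sqrtr_sqr gtr0_norm //.
by rewrite invfM mulrC mulrA mulfV // mul1r.
Qed.

Lemma normal_prob_cdf (m s b : R) : 0 < s ->
  normal_prob m s `]-oo, m + b * s] = (Phi b)%:E.
Proof.
move=> s0; pose F x := m + x * s.
have F'E : F^`()%classic = cst s.
  apply/funext => x; rewrite /F derive1E deriveD // derive_cst add0r.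
  by rewrite deriveM // derive_id derive_cst scaler0 add0r /=; exact: mulr1.
have Fcont : continuous F.
  move=> x; apply: cvgD; first exact: cvg_cst.
  by apply: cvgM; [exact: cvg_id | exact: cvg_cst].
rewrite /Phi fineK ?fin_num_measure // /normal_prob.
rewrite (@increasing_ge0_integration_by_substitutionNy _ F (normal_pdf m s) b);
  last 8 first.
- by move=> x y _ _ xy; rewrite ltrD2l ltr_pM2r.
- by rewrite F'E => x _; exact: cst_continuous.
- by rewrite F'E; exact: is_cvg_cst.
- by rewrite F'E; exact: cvg_cst.
- split; last exact: cvg_at_left_filter (Fcont b).
  by move=> x _; rewrite /F; apply: derivableD => //; exact: derivableM.
- have -> : F = +%R^~ m \o *%R^~ s by apply/funext => x; rewrite /F /= addrC.
  by apply: cvg_comp (cvg_addrr_Ny m); apply: gt0_cvgMlNy => //; exact: cvg_id.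
- exact/continuous_subspaceT/continuous_normal_pdf/lt0r_neq0.
- by move=> x _; exact: normal_pdf_ge0.
apply: eq_integral => x _; rewrite F'E !fctE /=; congr EFin.
exact: normal_pdf_affine.
Qed.

End normal_prob_transformations.

Lemma PhiN {R : realType} (x : R) : Phi (- x) = Qfun x.
Proof.
rewrite /Qfun /Phi.
have -> : `]-oo, - x]%classic = -%R @^-1` `[x, +oo[%classic.
  by rewrite opp_preimage_itvbndy.
by rewrite normal_prob_opp ?oner_eq0 // normal_prob_itvcy.
Qed.

Section normal_tails.
Context {R : realType}.
Variables (m s h : R).
Hypothesis s_gt0 : 0 < s.

Lemma normal_prob_upper_tail : normal_prob m s `[m + h, +oo[ = (Qfun (h / s))%:E.
Proof.
have -> : m + h = m + h / s * s by rewrite divfK ?gt_eqF.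
by rewrite normal_prob_itvcy normal_prob_cdf.
Qed.

Lemma normal_prob_lower_tail : normal_prob m s `]-oo, m - h[ = (Qfun (h / s))%:E.
Proof.
have -> : m - h = m + - (h / s) * s by rewrite mulNr divfK ?gt_eqF.
by rewrite normal_prob_itvNyo normal_prob_cdf // -PhiN.
Qed.

End normal_tails.

Lemma measure_bayes_le d (T : measurableType d) (R : realType)
    (P Q : {measure set T -> \bar R}) (U B : set T) :
  measurable U -> measurable B ->
  (forall V, measurable V -> V `<=` U -> P V <= Q V)%E ->
  (forall V, measurable V -> V `<=` ~` U -> Q V <= P V)%E ->
  (P U + Q (~` U) <= P B + Q (~` B))%E.
Proof.
move=> mU mB PQ QP.
have swap (x y z w : \bar R) : (x + y + (z + w) = w + y + (z + x))%E.
  by rewrite [z + w]addeC addeACA [x + w]addeC addeACA [x + z]addeC.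
rewrite (measureDI P mU mB) (measureDI Q (measurableC mU) mB).
rewrite (measureDI P mB mU) (measureDI Q (measurableC mB) mU) swap.
rewrite [U `&` B]setIC [~` U `\` B]setDE [~` B `\` U]setDE [~` U `&` ~` B]setIC.
apply: leeD; apply: leeD => //.
- rewrite setIC -setDE; apply: QP; first exact: measurableD.
  by move=> x [].
- rewrite setIC -setDE; apply: PQ; first exact: measurableD.
  by move=> x [].
Qed.

Lemma normal_pdf_le_dist {R : realType} (m1 m2 s x : R) :
  (x - m2) ^+ 2 <= (x - m1) ^+ 2 -> normal_pdf m1 s x <= normal_pdf m2 s x.
Proof.
move=> d21; rewrite /normal_pdf; case: ifPn => [_|s0]; first exact: lexx.
apply: ler_wpM2l; first exact: normal_peak_ge0.
rewrite /normal_fun ler_expR !mulNr lerN2; apply: ler_wpM2r => //.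
by rewrite invr_ge0 mulrn_wge0 // sqr_ge0.
Qed.

Lemma normal_prob_le_dist {R : realType} (m1 m2 s : R) (V : set R) : measurable V ->
  (forall x, V x -> (x - m2) ^+ 2 <= (x - m1) ^+ 2) ->
  (normal_prob m1 s V <= normal_prob m2 s V)%E.
Proof.
move=> mV d21; apply: ge0_le_integral => //.
- by move=> x _; rewrite lee_fin normal_pdf_ge0.
- by apply/measurable_EFinP; apply: measurable_funTS; exact: measurable_normal_pdf.
- by apply/measurable_EFinP; apply: measurable_funTS; exact: measurable_normal_pdf.
- by move=> x Vx; rewrite lee_fin normal_pdf_le_dist // d21.
Qed.

Lemma normal_prob_bayes_le {R : realType} (a b s : R) (B : set R) :
  a <= b -> measurable B ->
  (normal_prob a s `[((a + b) / 2)%R, +oo[ + normal_prob b s `]-oo, ((a + b) / 2)%R[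
    <= normal_prob a s B + normal_prob b s (~` B))%E.
Proof.
move=> ab mB; rewrite -setCitvr.
apply: measure_bayes_le => // V mV VU; apply: normal_prob_le_dist => // x /VU /=.
  by rewrite in_itv /= andbT => cx; nra.
by rewrite in_itv /= andbT => /negP; rewrite -ltNge => xc; nra.
Qed.

Section dilation.
Context {R : realType} {V : normedModType R}.

Definition dilate (A : set V) (e : R) : set V :=
  [set x | exists2 y, `|y - x| <= e & A y].

Lemma open_dilate (A : set V) (e : R) : open A -> open (dilate A e).
Proof.
move=> oA; rewrite !openE in oA * => x [y yx Ay].
have /nbhs_ballP [r r0 yrA] : nbhs y A by exact: oA.
apply/nbhs_ballP; exists r => // z xz; exists (y + (z - x)).
  by rewrite addrCA addrAC subrr add0r.
have := yrA (y + (z - x)); apply; move: xz; rewrite -!ball_normE /ball_ /=.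
by rewrite opprD addrA subrr add0r opprB.
Qed.

Lemma shift_erosion_sub_dilate (A : set V) (e : R) (t : V) : `|t| <= 2 * e ->
  (+%R^~ t) @^-1` (~` dilate (~` A) e) `<=` dilate A e.
Proof.
move=> te x /= xtA; exists (x + 2^-1 *: t).
  by rewrite addrC addKr normrZ ger0_norm; lra.
apply: contrapT => nA; apply: xtA; exists (x + 2^-1 *: t) => //.
by rewrite opprD addrACA subrr add0r -{2}(scale1r t) -scalerBl normrZ ler0_norm; lra.
Qed.

End dilation.

(* No measurability of [f] is required, so this applies to the class-0 loss,
   an indicator of the eps-neighbourhood of A, which is never shown measurable. *)
Lemma measure_le_integral d (T : measurableType d) (R : realType)
    (mu : {measure set T -> \bar R}) (W : set T) (f : T -> \bar R) :
  measurable W -> (forall x, 0 <= f x)%E -> (forall x, W x -> 1 <= f x)%E ->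
  (mu W <= \int[mu]_x f x)%E.
Proof.
move=> mW f0 f1; rewrite ge0_integralTE //.
apply: ereal_sup_ubound; exists (indic_nnsfun R mW).
  move=> x /=; rewrite /mindic indicE.
  by case: (boolP (x \in W)) => [/set_mem/f1 //|_]; rewrite f0.
by rewrite sintegral_indic // setIT.
Qed.

Section adversarial_loss.
Context {R : realType}.

Lemma adv_lossE (A : set R) (e x : R) (y : bool) : 0 <= e ->
  adv_loss A e x y = (\1_(dilate [set z | (z \in A) != y] e) x)%:E.
Proof.
move=> e0; rewrite /adv_loss indicE.
have [[z zx Az]|nD] := pselect (dilate [set z | (z \in A) != y] e x).
- rewrite mem_set; last by exists z.
  apply/eqP; rewrite eq_le; apply/andP; split.
    by apply: ge_ereal_sup => _ [w _ <-]; rewrite lee_fin; case: ((w \in A) != y).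
  by apply: ereal_sup_ubound; exists z => //=; rewrite Az.
- rewrite memNset //; apply/eqP; rewrite eq_le; apply/andP; split.
    apply: ge_ereal_sup => _ [w wx <-]; rewrite lee_fin.
    by rewrite ler_nat leqn0 eqb0; apply/negP => Aw; apply: nD; exists w.
  apply: ereal_sup_ubound; exists x; first by rewrite /= subrr normr0.
  suff /negbTE -> : ~~ ((x \in A) != y) by [].
  by apply/negP => Ax; apply: nD; exists x; rewrite ?subrr ?normr0.
Qed.

Lemma adv_loss_false (A : set R) (e x : R) : 0 <= e ->
  adv_loss A e x false = (\1_(dilate A e) x)%:E.
Proof.
move=> e0; rewrite adv_lossE //; congr (\1_(dilate _ e) x)%:E.
apply/seteqP; split => z /=; rewrite eqbF_neg negbK; first exact: set_mem.
exact: mem_set.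
Qed.

Lemma adv_loss_true (A : set R) (e x : R) : 0 <= e ->
  adv_loss A e x true = (\1_(dilate (~` A) e) x)%:E.
Proof.
move=> e0; rewrite adv_lossE //; congr (\1_(dilate _ e) x)%:E.
by apply/seteqP; split => z /=; rewrite eqb_id notin_setE.
Qed.

End adversarial_loss.

Section robust_risk.
Context {R : realType}.
Variables (mu0 mu1 sigma eps : R).
Hypotheses (sigma_gt0 : 0 < sigma) (eps_ge0 : 0 <= eps).
Local Notation risk := (adv_risk mu0 mu1 sigma eps).
Local Notation dilate_eps A := (@dilate R R A eps).

Lemma adv_riskE (A : set R) :
  measurable (dilate_eps A) -> measurable (dilate_eps (~` A)) ->
  risk A = ((1/2)%:E * normal_prob mu0 sigma (dilate_eps A)
            + (1/2)%:E * normal_prob mu1 sigma (dilate_eps (~` A)))%E.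
Proof.
move=> mD mDC; rewrite /adv_risk.
under eq_integral do rewrite adv_loss_false //.
under [X in (_ + _ * X)%E]eq_integral do rewrite adv_loss_true //.
by rewrite !integral_indic // !setIT.
Qed.

Lemma adv_risk_set0 : risk set0 = (1/2)%:E.
Proof.
have D0 : dilate_eps (@set0 R) = set0 by apply/seteqP; split => x // [].
have DC0 : dilate_eps (~` @set0 R) = setT.
  by apply/seteqP; split => x // _; exists x; rewrite ?subrr ?normr0.
rewrite adv_riskE; rewrite ?D0 ?DC0 //.
by rewrite measure0 probability_setT mule0 add0e mule1.
Qed.

Lemma adv_risk_halfline (c : R) : risk [set x | c <= x] =
  ((1/2)%:E * normal_prob mu0 sigma `[(c - eps)%R, +oo[
   + (1/2)%:E * normal_prob mu1 sigma `]-oo, (c + eps)%R[)%E.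
Proof.
have DH : dilate_eps [set x | c <= x] = `[c - eps, +oo[%classic.
  apply/seteqP; split => x /=; rewrite in_itv /= andbT.
    by move=> [y]; rewrite ler_norml /= => /andP[? ?] ?; lra.
  by move=> ?; exists (x + eps); [rewrite addrC addKr ger0_norm | rewrite /=; lra].
have DCH : dilate_eps (~` [set x | c <= x]) = `]-oo, c + eps[%classic.
  apply/seteqP; split => x /=; rewrite in_itv /=.
    by move=> [y]; rewrite ler_norml /= => /andP[? ?] /negP; rewrite -ltNge => ?; lra.
  move=> ?; exists (x - eps); first by rewrite addrC addKr normrN ger0_norm.
  by rewrite /=; apply/negP; rewrite -ltNge; lra.
by rewrite adv_riskE; rewrite ?DH ?DCH.
Qed.

Lemma adv_risk_ge_shift (A : set R) (t : R) : closed A -> `|t| <= 2 * eps ->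
  ((1/2)%:E * normal_prob (mu0 + t) sigma (~` dilate_eps (~` A))
   + (1/2)%:E * normal_prob mu1 sigma (dilate_eps (~` A))
   <= risk A)%E.
Proof.
move=> cA te.
have mT : measurable (dilate_eps (~` A)).
  by apply: open_measurable; apply: open_dilate; exact: closed_openC.
rewrite /adv_risk; apply: leeD; apply: lee_wpmul2l => //.
- rewrite -normal_prob_shift ?gt_eqF //; last exact: measurableC.
  apply: measure_le_integral.
  + rewrite -[X in measurable X]setTI.
    by apply: measurable_funD => //; exact: measurableC.
  + by move=> x; rewrite adv_loss_false // lee_fin.
  + move=> x Wx; rewrite adv_loss_false // indicE mem_set //.
    exact: (shift_erosion_sub_dilate te).
- under eq_integral do rewrite adv_loss_true //.
  by rewrite integral_indic // setIT.
Qed.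

Lemma opt_risk_attained (v : \bar R) (A0 : set R) : closed A0 -> risk A0 = v ->
  (forall A, closed A -> (v <= risk A)%E) -> opt_risk mu0 mu1 sigma eps = v.
Proof.
move=> cA0 rA0 v_le; apply/eqP; rewrite eq_le; apply/andP; split.
  by apply: ge_ereal_inf; exists v => //; exists A0.
by apply/ereal_infP => _ [A cA <-]; exact: v_le.
Qed.

Lemma opt_risk_large_eps : `|mu1 - mu0| <= 2 * eps ->
  opt_risk mu0 mu1 sigma eps = (1/2)%:E.
Proof.
move=> far; apply: (opt_risk_attained closed0 adv_risk_set0) => A cA.
apply: le_trans (adv_risk_ge_shift cA far); rewrite subrKC.
have mT : measurable (dilate_eps (~` A)).
  by apply: open_measurable; apply: open_dilate; exact: closed_openC.
rewrite -ge0_muleDr // probability_setC //= subeK ?mule1 //.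
exact: fin_num_measure.
Qed.

Section separated_means.
Hypothesis small_eps : 2 * eps < mu1 - mu0.
Let d := (mu1 - mu0) / 2 - eps.

Lemma adv_risk_midpoint :
  risk [set x | (mu0 + mu1) / 2 <= x] = (Qfun (d / sigma))%:E.
Proof.
rewrite adv_risk_halfline.
have -> : (mu0 + mu1) / 2 - eps = mu0 + d by rewrite /d; field.
have -> : (mu0 + mu1) / 2 + eps = mu1 - d by rewrite /d; field.
rewrite normal_prob_upper_tail // normal_prob_lower_tail //.
by rewrite -!EFinM -EFinD -mulrDl -splitr mul1r.
Qed.

Lemma opt_risk_small_eps : opt_risk mu0 mu1 sigma eps = (Qfun (d / sigma))%:E.
Proof.
apply: (opt_risk_attained _ adv_risk_midpoint) => [|A cA]; first exact: closed_ge.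
have two_eps : `|2 * eps| <= 2 * eps by rewrite ger0_norm ?mulr_ge0.
apply: le_trans (adv_risk_ge_shift cA two_eps).
have mT : measurable (dilate_eps (~` A)).
  by apply: open_measurable; apply: open_dilate; exact: closed_openC.
have ab : mu0 + 2 * eps <= mu1 by move: small_eps; lra.
have := normal_prob_bayes_le sigma ab (measurableC mT); rewrite setCK.
have c_up : (mu0 + 2 * eps + mu1) / 2 = mu0 + 2 * eps + d by rewrite /d; field.
have c_low : (mu0 + 2 * eps + mu1) / 2 = mu1 - d by rewrite /d; field.
rewrite {1}c_up c_low normal_prob_upper_tail // normal_prob_lower_tail // => bayes.
set q := Qfun (d / sigma).
have -> : q%:E = ((1/2)%:E * (q%:E + q%:E))%E by rewrite -EFinD -EFinM; congr EFin; field.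
by rewrite -ge0_muleDr //; exact: lee_wpmul2l.
Qed.

End separated_means.

End robust_risk.

Theorem theorem3 (R : realType) (mu0 mu1 sigma eps : R)
  (hsigma : 0 < sigma) (hmu : mu0 < mu1) (heps : 0 <= eps) :
  (`|mu0 - mu1| / 2 <= eps ->
     opt_risk mu0 mu1 sigma eps = (1/2)%:E /\
     exists c : bool,
       adv_risk mu0 mu1 sigma eps (if c then setT else set0)
         = opt_risk mu0 mu1 sigma eps) /\
  (eps < `|mu0 - mu1| / 2 ->
     adv_risk mu0 mu1 sigma eps [set x | (mu0 + mu1) / 2 <= x]
       = opt_risk mu0 mu1 sigma eps /\
     opt_risk mu0 mu1 sigma eps = (Qfun (((mu1 - mu0) / 2 - eps) / sigma))%:E).
Proof.
rewrite distrC; split => [far | near].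
  have far2 : `|mu1 - mu0| <= 2 * eps by lra.
  have opt := opt_risk_large_eps hsigma heps far2.
  by split => //; exists false; rewrite opt adv_risk_set0.
have small : 2 * eps < mu1 - mu0 by rewrite gtr0_norm ?subr_gt0 in near; lra.
by rewrite opt_risk_small_eps // adv_risk_midpoint.
Qed.
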